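(* For $n\ge1$ and $0\le i\le\lfloor n/2\rfloor$, $b(n,i,i)=\dfrac{n!}{i!(n-2i)!2^i}$.
   Context: The integers $b(n,i,j)$ ($n\ge1$) are defined by $b(1,0,0)=1$, $b(1,i,j)=0$ for $(i,j)\ne(0,0)$, $b(n,i,j)=0$ if $i<0$ or $j<0$, and $b(n+1,i,j)=b(n,i,j)+2i\,b(n,i,j-1)+(n-2i+2)\,b(n,i-1,j-1)$. (Equivalently, $b(n,i,j)$ is the number of $\pi\in\mathfrak{S}_n$ with $i$ cycle peaks — indices $m$ with $\pi^{-1}(m)<m>\pi(m)$ — and $n-j$ cycles.) *)

From mathcomp Require Import all_boot all_order all_algebra.
Set Implicit Arguments. Unset Strict Implicit. Unset Printing Implicit Defensive.
Import GRing.Theory Num.Theory.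
Local Open Scope ring_scope.

(* b_aux m i j = b(m+1, i, j) for natural indices i j; negative indices
   are handled by the convention b(n,i,j) = 0 when i < 0 or j < 0. *)
Fixpoint b_aux (m : nat) (i j : nat) : int :=
  match m with
  | 0%N => if (i == 0%N) && (j == 0%N) then 1 else 0
  | m'.+1 =>
      b_aux m' i j
      + (match j with 0%N => 0 | j'.+1 => (2 * i)%:Z * b_aux m' i j' end)
      + (match i, j with
         | i'.+1, j'.+1 => ((m'.+1)%:Z - (2 * i)%:Z + 2) * b_aux m' i' j'
         | _, _ => 0 end)
  end.

Definition b (n i j : nat) : int := b_aux n.-1 i j.

Example ex1 : b 4 2 2 = 3. Proof. by []. Qed.
Example ex2 : b 5 1 1 = 10. Proof. by []. Qed.

(** b(n,i,i) counts the involutions of n points with i two-cycles (and no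
    other non-trivial cycle): choose the 2i moved points, then pair them up
    in (2i-1)!! ways.  On the diagonal the recurrence for b loses its middle
    term (b(n,i,i-1) = 0), and what remains is exactly the recurrence of this
    count obtained by deciding whether the new point n+1 is fixed or paired.
    The closed form follows from (2i)! = (2i-1)!! i! 2^i. *)
From mathcomp Require Import all_boot all_order all_algebra.
From mathcomp Require Import zify.
Local Open Scope ring_scope.
Import GRing.Theory.

Set Implicit Arguments.
Unset Strict Implicit.
Unset Printing Implicit Defensive.

Fixpoint odd_dfact (i : nat) : nat :=
  if i is k.+1 then ((2 * k).+1 * odd_dfact k)%N else 1%N.

Definition involution_count (n i : nat) : nat := ('C(n, 2 * i) * odd_dfact i)%N.

Lemma odd_dfact_fact (i : nat) : (odd_dfact i * (i`! * 2 ^ i))%N = (2 * i)`!.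
Proof.
elim: i => [|i IHi] //=.
have -> : (2 * i.+1 = (2 * i).+2)%N by rewrite mulnS.
rewrite !factS expnS -IHi; lia.
Qed.

Lemma involution_count_fact (n i : nat) : (2 * i <= n)%N ->
  (involution_count n i * (i`! * (n - 2 * i)`! * 2 ^ i))%N = n`!.
Proof.
move=> le2in; rewrite -(bin_fact le2in) -odd_dfact_fact /involution_count; lia.
Qed.

Lemma involution_count0 (n : nat) : involution_count n 0 = 1%N.
Proof. by rewrite /involution_count bin0. Qed.

Lemma involution_countS (n i : nat) :
  involution_count n.+1 i.+1 =
  (involution_count n i.+1 + (n - 2 * i) * involution_count n i)%N.
Proof.
rewrite /involution_count /= mulnS binS mulnDl; congr (_ + _).
by rewrite mulnCA mulnA mul_bin_left -mulnA.
Qed.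

Lemma b_aux_below_diag (m i j : nat) : (j < i)%N -> b_aux m i j = 0.
Proof.
elim: m i j => [|m IHm] [|i] [|j] //= ltji.
- by rewrite !IHm // mulr0 !addr0.
- by rewrite !IHm // ?mulr0 ?addr0 // ltnW.
Qed.

Lemma b_aux_diag (m i : nat) : b_aux m i i = (involution_count m.+1 i)%:Z.
Proof.
elim: m i => [|m IHm] [|i].
- by [].
- by rewrite /involution_count bin_small // mulnS.
- by rewrite involution_count0 /= IHm involution_count0 !addr0.
rewrite /= (@b_aux_below_diag m i.+1 i) // mulr0 addr0 !IHm.
rewrite (involution_countS m.+1) PoszD !PoszM; congr (_ + _).
(* The integer coefficient m+1-2i differs from the truncated natural one only
   when 2i > m+1, where the count vanishes anyway. *)
have [le2im|lt_m2i] := leqP (2 * i) m.+1; first by congr (_ * _); lia.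
by rewrite /involution_count bin_small // !mul0r !mulr0.
Qed.

Theorem corollary6 (n i : nat) :
  (1 <= n)%N -> (i <= n./2)%N ->
  b n i i = ((n`! %/ (i`! * (n - 2 * i)`! * 2 ^ i))%N)%:Z.
Proof.
case: n => [|m] // _ le_i_half.
have le2in : (2 * i <= m.+1)%N by lia.
rewrite /b b_aux_diag -(involution_count_fact le2in) mulnK //.
by rewrite !muln_gt0 !fact_gt0 expn_gt0.
Qed.
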